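(* Let $\Omega=\{\omega_1,\dots,\omega_K\}$ with $0<\omega_1<\dots<\omega_K$ and let $\mu^*$ be an aggregate market such that $\mu^*\in\mathcal{M}_r\cap\mathcal{M}_s$ for some $r<s$ (the monopolist is indifferent between charging $\omega_r$ and $\omega_s$ in $\mu^*$). Then for every cost level $k\ge0$, not segmenting (the segmentation placing all mass on $\mu^*$) is not optimal: there exists a segmentation of $\mu^*$ giving the monopolist a strictly higher net payoff, so the monopolist always chooses to segment the market.
   Context: A monopolist with zero marginal cost sells one good to a unit mass of consumers with valuations in $\Omega$. A market is a probability vector $\mu=(\mu_1,\dots,\mu_K)$, $\mu_i$ the share of consumers with valuation $\omega_i$. Let $s(p,\omega)=p$ if $\omega\ge p$ and $0$ otherwise; in each market $\mu$ the monopolist charges $p^*(\mu)\in\arg\max_p\sum_i s(p,\omega_i)\mu_i$, and $\mathcal{M}_j$ denotes the set of markets in which $\omega_j$ is an optimal price. A segmentation of $\mu^*$ is a finitely supported probability distribution $\tau$ over markets with $\sum_{\mu^s\in\mathrm{supp}\,\tau}\tau(\mu^s)\mu^s=\mu^*$. With Shannon entropy $H(\mu)=-\sum_i\mu_i\ln\mu_i$ ($0\ln0=0$), the cost of $\tau$ is $c(\tau;\mu^*,k)=k\,[H(\mu^* )-\mathbb{E}_\tau H(\mu^s)]$, and the monopolist's net payoff from $\tau$ is $\mathbb{E}_\tau\big[\sum_i s(p^*(\mu^s),\omega_i)\mu^s_i\big]-c(\tau;\mu^*,k)$. *)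

From mathcomp Require Import all_boot all_order all_algebra.
From mathcomp Require Import all_classical all_reals.
From mathcomp Require Import exp.
Set Implicit Arguments. Unset Strict Implicit. Unset Printing Implicit Defensive.
Import Order.TTheory GRing.Theory Num.Theory.
Local Open Scope ring_scope.

Section Defs.
Variables (R : realType) (K : nat).

Definition is_market (mu : 'I_K -> R) : Prop :=
  (forall i, 0 <= mu i) /\ \sum_(i < K) mu i = 1.

Definition sfun (p x : R) : R := if p <= x then p else 0.

Definition revenue (w : 'I_K -> R) (p : R) (mu : 'I_K -> R) : R :=
  \sum_(i < K) sfun p (w i) * mu i.

Definition optimal_price (w : 'I_K -> R) (mu : 'I_K -> R) (p : R) : Prop :=
  forall q : R, revenue w q mu <= revenue w p mu.

Definition in_M (w : 'I_K -> R) (j : 'I_K) (mu : 'I_K -> R) : Prop :=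
  is_market mu /\ optimal_price w mu (w j).

Definition xlnx (x : R) : R := if x == 0 then 0 else x * ln x.

Definition entropy (mu : 'I_K -> R) : R := - \sum_(i < K) xlnx (mu i).

(* A finitely supported segmentation of mustar, given by its n support
   points tm j with (positive) probabilities tw j. *)
Definition is_segmentation (mustar : 'I_K -> R) (n : nat)
  (tw : 'I_n -> R) (tm : 'I_n -> 'I_K -> R) : Prop :=
  [/\ forall j, 0 < tw j,
      \sum_(j < n) tw j = 1,
      forall j, is_market (tm j) &
      forall i, \sum_(j < n) tw j * tm j i = mustar i].

Definition seg_cost (k : R) (mustar : 'I_K -> R) (n : nat)
  (tw : 'I_n -> R) (tm : 'I_n -> 'I_K -> R) : R :=
  k * (entropy mustar - \sum_(j < n) tw j * entropy (tm j)).

Definition net_payoff (w : 'I_K -> R) (pstar : ('I_K -> R) -> R) (k : R)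
  (mustar : 'I_K -> R) (n : nat) (tw : 'I_n -> R) (tm : 'I_n -> 'I_K -> R) : R :=
  \sum_(j < n) tw j * revenue w (pstar (tm j)) (tm j)
  - seg_cost k mustar tw tm.

End Defs.

(* Pick valuations a in [r, s) and b >= s carrying mass in mu*: both exist,
   since w_s earns a positive profit and, were [r, s) empty, w_s would
   strictly beat w_r.
   Split mu* evenly into mu* + e (1_a - 1_b) and mu* - e (1_a - 1_b).  In the
   first market the price w_r still earns the common optimal profit V, and in
   the second the price w_s earns V + e w_s, so revenue rises by at least
   e w_s / 2.  Since ln y - ln x <= (y - x) / x, the entropy lost by the
   split is O(e^2) at the interior point mu*, so for small e the linear gain
   beats the quadratic information cost whatever k is. *)

From mathcomp Require Import all_boot all_order all_algebra.
From mathcomp Require Import all_classical all_reals.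
From mathcomp Require Import exp.
From mathcomp Require Import ring lra.
Import Order.TTheory GRing.Theory Num.Theory.
Local Open Scope ring_scope.

Section RealBounds.
Context {R : realType}.

Lemma ln_sub_le (x y : R) : 0 < x -> 0 < y -> ln y - ln x <= (y - x) / x.
Proof.
move=> x0 y0; rewrite -ln_div ?posrE //.
have yx : y / x = 1 + (y - x) / x by field; rewrite gt_eqF.
have : 0 < y / x by exact: divr_gt0.
rewrite yx => ?; apply: le_ln1Dx; lra.
Qed.

Lemma xlnx_midpoint_gap (x h : R) : `|h| < x ->
  xlnx (x + h) + xlnx (x - h) - 2 * xlnx x <= 2 * h ^+ 2 / x.
Proof.
move=> hx; have [x0 xh0 xh0'] : [/\ 0 < x, 0 < x + h & 0 < x - h].
  by move: hx; rewrite ltr_norml; split; lra.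
rewrite /xlnx !gt_eqF //.
have tangent y : 0 < y -> y * (ln y - ln x) <= y * ((y - x) / x).
  by move=> y0; apply: ler_wpM2l; [exact: ltW | exact: ln_sub_le].
have := tangent _ xh0; have := tangent _ xh0'.
have -> : 2 * h ^+ 2 / x = (x + h) * ((x + h - x) / x) + (x - h) * ((x - h - x) / x).
  by field; rewrite gt_eqF.
lra.
Qed.

Lemma exists_small_pos (e1 c delta : R) : 0 < e1 -> 0 <= c -> 0 < delta ->
  exists e, [/\ 0 < e, e <= e1 & c * e < delta].
Proof.
move=> e1_gt0 c_ge0 delta_gt0.
have c1_gt0 : 0 < c + 1 by lra.
exists (Num.min e1 (delta / (c + 1))); split.
- by rewrite lt_min e1_gt0 divr_gt0.
- by rewrite ge_min lexx.
- apply: (@le_lt_trans _ _ (c * (delta / (c + 1)))).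
    by rewrite ler_wpM2l // ge_min lexx orbT.
  rewrite mulrA ltr_pdivrMr //; nra.
Qed.

End RealBounds.

Definition perturb {R : realType} {K : nat} (mu d : 'I_K -> R) (e : R) : 'I_K -> R :=
  fun i => mu i + e * d i.

Section Perturbation.
Context {R : realType} {K : nat}.
Implicit Types (mu d : 'I_K -> R) (e : R).

Lemma revenue_perturb w p mu d e :
  revenue w p (perturb mu d e) = revenue w p mu + e * revenue w p d.
Proof.
rewrite /revenue mulr_sumr -big_split /=.
by apply: eq_bigr => i _; rewrite /perturb; ring.
Qed.

Lemma perturb_market {mu d e} : is_market mu -> \sum_i d i = 0 ->
  (forall i, d i != 0 -> `|e * d i| < mu i) -> is_market (perturb mu d e).
Proof.
move=> [mu_ge0 mu_sum1] d_sum0 small; split.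
  move=> i; rewrite /perturb; have [d0|/small] := eqVneq (d i) 0.
    by rewrite d0 mulr0 addr0.
  by rewrite ltr_norml => /andP[? _]; lra.
by rewrite /perturb big_split /= -mulr_sumr mu_sum1 d_sum0 mulr0 addr0.
Qed.

Lemma entropy_mirror_gap_le {mu d e} :
    (forall i, d i != 0 -> `|e * d i| < mu i) ->
  entropy mu - 2^-1 * (entropy (perturb mu d e) + entropy (perturb mu d (- e)))
    <= e ^+ 2 * \sum_i d i ^+ 2 / mu i.
Proof.
move=> small; rewrite /entropy -[in X in 2^-1 * X]opprD -big_split /=.
have -> : forall a b : R, - a - 2^-1 * - b = 2^-1 * (b - 2 * a) by move=> a b; field.
rewrite mulr_sumr -sumrB !mulr_sumr; apply: ler_sum => i _.
rewrite /perturb mulNr.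
have [d0|/small/xlnx_midpoint_gap] := eqVneq (d i) 0.
  by rewrite d0 !mulr0 addr0 subr0 expr0n /= mul0r mulr0; lra.
rewrite exprMn; lra.
Qed.

Lemma perturbation_room {mu d} : (forall i, d i != 0 -> 0 < mu i) ->
  exists2 e1, 0 < e1 & forall e, 0 < e <= e1 -> forall i, d i != 0 -> `|e * d i| < mu i.
Proof.
move=> supp; set S := \sum_j `|d j / mu j|.
have S_ge0 : 0 <= S by exact: sumr_ge0.
exists (1 + S)^-1 => [|e /andP[e_gt0 e_le] i /[dup] /supp mu_gt0 di0].
  by rewrite invr_gt0; lra.
have : `|d i / mu i| <= S by rewrite /S (bigD1 i) //= lerDl sumr_ge0.
rewrite normrM normrV ?unitfE ?gt_eqF // (gtr0_norm mu_gt0) ler_pdivrMr // => di_le.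
have di_gt0 : 0 < `|d i| by rewrite normr_gt0.
rewrite normrM (gtr0_norm e_gt0).
apply: (@le_lt_trans _ _ ((1 + S)^-1 * `|d i|)); first by rewrite ler_pM2r.
rewrite mulrC -ltr_pdivlMr ?invr_gt0 ?invrK; nra.
Qed.

End Perturbation.

Definition unit_diff {R : realType} {K : nat} (a b : 'I_K) : 'I_K -> R :=
  fun i => (i == a)%:R - (i == b)%:R.

Section UnitDiff.
Context {R : realType} {K : nat} (a b : 'I_K).

Lemma sum_mul_unit_diff (F : 'I_K -> R) : \sum_i F i * unit_diff a b i = F a - F b.
Proof.
under eq_bigr do rewrite mulrBr !mulr_natr !mulrb.
by rewrite sumrB -!big_mkcond !big_pred1_eq.
Qed.

Lemma unit_diff_support i : (unit_diff a b i : R) != 0 -> i = a \/ i = b.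
Proof.
rewrite /unit_diff; have [-> _|ia] := eqVneq i a; first by left.
by have [-> _|ib] := eqVneq i b; [right | rewrite subrr eqxx].
Qed.

End UnitDiff.

Section PostedPrices.
Context {R : realType} {K : nat} {w : 'I_K -> R}.
Hypothesis w_incr : forall i j : 'I_K, (i < j)%N -> w i < w j.

Lemma revenue_at_valuation j (mu : 'I_K -> R) :
  revenue w (w j) mu = w j * \sum_(i : 'I_K | (j <= i)%N) mu i.
Proof.
rewrite /revenue [in RHS]big_mkcond mulr_sumr; apply: eq_bigr => i _.
by rewrite /sfun (le_mono w_incr) -[(j <= i)%O]/(j <= i)%N; case: ifP; rewrite ?mul0r ?mulr0.
Qed.

Hypothesis w_gt0 : forall i, 0 < w i.

Lemma indifference_masses {mu : 'I_K -> R} {r s : 'I_K} : (r < s)%N ->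
    in_M w r mu -> in_M w s mu ->
  (exists a : 'I_K, (r <= a < s)%N /\ 0 < mu a) /\
  (exists b : 'I_K, (s <= b)%N /\ 0 < mu b).
Proof.
move=> rs [[mu_ge0 mu_sum1] r_opt] [_ s_opt].
set M := \sum_(i : 'I_K | (r <= i < s)%N) mu i; set T := \sum_(i : 'I_K | (s <= i)%N) mu i.
have tail_split : \sum_(i : 'I_K | (r <= i)%N) mu i = M + T.
  rewrite (bigID (fun i : 'I_K => (i < s)%N)) /=; congr (_ + _).
  by apply: eq_bigl => i; rewrite -leqNgt andb_idl // => /(leq_trans (ltnW rs)).
have indiff : w r * (M + T) = w s * T.
  by rewrite -tail_split -!revenue_at_valuation; apply/eqP; rewrite eq_le r_opt s_opt.
(* The lowest valuation: at that price everyone buys. *)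
pose i0 : 'I_K := Ordinal (leq_ltn_trans (leq0n r) (ltn_ord r)).
have V_gt0 : 0 < w s * T.
  rewrite -revenue_at_valuation; apply: lt_le_trans (s_opt (w i0)).
  by rewrite revenue_at_valuation (eq_bigl predT) // mu_sum1 mulr1.
have T_gt0 : 0 < T by move: V_gt0; rewrite pmulr_rgt0.
have M_gt0 : 0 < M.
  have : 0 < (w s - w r) * T by rewrite mulr_gt0 // subr_gt0 w_incr.
  by rewrite mulrBl -indiff mulrDr addrK pmulr_rgt0.
split.
- have [a /andP[ras mu_a]] := psumr_neq0P (fun i _ => mu_ge0 i) (elimN eqP (lt0r_neq0 M_gt0)).
  by exists a.
- have [b /andP[sb mu_b]] := psumr_neq0P (fun i _ => mu_ge0 i) (elimN eqP (lt0r_neq0 T_gt0)).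
  by exists b.
Qed.

End PostedPrices.

Definition mirror_split {R : realType} {K : nat} (mu d : 'I_K -> R) (e : R) :
    'I_2 -> 'I_K -> R :=
  fun j => perturb mu d (if j == ord0 then e else - e).

Section MirrorSplit.
Context {R : realType} {K : nat} {w : 'I_K -> R} {pstar : ('I_K -> R) -> R}.
Context {mu d : 'I_K -> R}.

Hypotheses (mu_market : is_market mu) (d_sum0 : \sum_i d i = 0).

Lemma mirror_split_segmentation e : (forall i, d i != 0 -> `|e * d i| < mu i) ->
  is_segmentation mu (fun=> 2^-1) (mirror_split mu d e).
Proof.
move=> small; split.
- by move=> _; rewrite invr_gt0.
- by rewrite !big_ord_recl big_ord0 /=; lra.
- case=> -[|[|//]] ? /=; apply: perturb_market => // i /small.
  by rewrite mulNr normrN.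
- by move=> i; rewrite !big_ord_recl big_ord0 /mirror_split /perturb /=; field.
Qed.

Lemma net_payoff_mirror_split k e :
  let mu1 := perturb mu d e in let mu2 := perturb mu d (- e) in
  net_payoff w pstar k mu (fun=> 2^-1) (mirror_split mu d e) =
    2^-1 * (revenue w (pstar mu1) mu1 + revenue w (pstar mu2) mu2)
    - k * (entropy mu - 2^-1 * (entropy mu1 + entropy mu2)).
Proof. by rewrite /net_payoff /seg_cost !big_ord_recl !big_ord0 /=; ring. Qed.

Lemma net_payoff_unsegmented k :
  net_payoff w pstar k mu (fun _ : 'I_1 => 1) (fun _ : 'I_1 => mu) =
    revenue w (pstar mu) mu.
Proof. by rewrite /net_payoff /seg_cost !big_ord_recl !big_ord0 /=; ring. Qed.

Hypothesis hpstar : forall mu, is_market mu -> optimal_price w mu (pstar mu).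
Hypothesis d_supp : forall i, d i != 0 -> 0 < mu i.

Theorem mirror_split_improves {k p q : R} : 0 <= k ->
    optimal_price w mu p -> optimal_price w mu q ->
    revenue w q d < revenue w p d ->
  exists e, is_segmentation mu (fun=> 2^-1) (mirror_split mu d e) /\
    net_payoff w pstar k mu (fun=> 2^-1) (mirror_split mu d e) >
    net_payoff w pstar k mu (fun _ : 'I_1 => 1) (fun _ : 'I_1 => mu).
Proof.
move=> k_ge0 p_opt q_opt qp.
have [e1 e1_gt0 room] := perturbation_room d_supp.
set C := \sum_i d i ^+ 2 / mu i; set delta := revenue w p d - revenue w q d.
have C_ge0 : 0 <= C by apply: sumr_ge0 => i _; rewrite divr_ge0 ?sqr_ge0 ?mu_market.1.
have [e [e_gt0 e_le gain]] : exists e, [/\ 0 < e, e <= e1 & 2 * k * C * e < delta].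
  by apply: exists_small_pos; rewrite ?mulr_ge0 ?subr_gt0.
have small := room e (introT andP (conj e_gt0 e_le)).
have small' i : d i != 0 -> `|- e * d i| < mu i by move/small; rewrite mulNr normrN.
exists e; split; first exact: mirror_split_segmentation.
rewrite net_payoff_mirror_split net_payoff_unsegmented /=.
set mu1 := perturb mu d e; set mu2 := perturb mu d (- e).
have gain1 : revenue w p mu + e * revenue w p d <= revenue w (pstar mu1) mu1.
  rewrite -revenue_perturb; exact: hpstar _ (perturb_market mu_market d_sum0 small) p.
have gain2 : revenue w q mu - e * revenue w q d <= revenue w (pstar mu2) mu2.
  rewrite -mulNr -revenue_perturb.
  exact: hpstar _ (perturb_market mu_market d_sum0 small') q.
have base : revenue w (pstar mu) mu <= revenue w p mu := p_opt _.
have pq : revenue w p mu <= revenue w q mu := q_opt p.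
have cost := ler_wpM2l k_ge0 (entropy_mirror_gap_le small).
have : k * (e ^+ 2 * C) * 2 < delta * e by rewrite expr2; nra.
rewrite -/C /delta in cost *; lra.
Qed.

End MirrorSplit.

Theorem proposition2 (R : realType) (K : nat) (w : 'I_K -> R)
  (hwpos : forall i, 0 < w i)
  (hwinc : forall i j : 'I_K, (i < j)%N -> w i < w j)
  (pstar : ('I_K -> R) -> R)
  (hpstar : forall mu, is_market mu -> optimal_price w mu (pstar mu))
  (mustar : 'I_K -> R) (r s : 'I_K) (hrs : (r < s)%N)
  (hr : in_M w r mustar) (hs : in_M w s mustar)
  (k : R) (hk : 0 <= k) :
  exists (n : nat) (tw : 'I_n -> R) (tm : 'I_n -> 'I_K -> R),
    is_segmentation mustar tw tm /\
    net_payoff w pstar k mustar tw tm >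
      net_payoff w pstar k mustar (fun _ : 'I_1 => 1) (fun _ : 'I_1 => mustar).
Proof.
have [[a [/andP[ra a_s] mu_a]] [b [s_b mu_b]]] := indifference_masses hwinc hwpos hrs hr hs.
pose d : 'I_K -> R := unit_diff a b.
have d_sum0 : \sum_i d i = 0.
  by rewrite -(eq_bigr _ (fun i _ => mul1r (d i))) sum_mul_unit_diff subrr.
have d_supp i : d i != 0 -> 0 < mustar i by case/unit_diff_support => ->.
have s_beats_r : revenue w (w s) d < revenue w (w r) d.
  have le_w i j : (w i <= w j) = (i <= j)%N by exact: (le_mono hwinc).
  rewrite /revenue !sum_mul_unit_diff /sfun !le_w ra (leq_trans (ltnW hrs) s_b).
  by rewrite s_b leqNgt a_s subrr sub0r oppr_lt0.
have [e [seg gain]] := mirror_split_improves hr.1 d_sum0 hpstar d_supp hk hr.2 hs.2 s_beats_r.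
by exists 2%N, (fun=> 2^-1), (mirror_split mustar d e).
Qed.
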